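(* Let $(P,\leqslant)$ be a finite partially ordered set. Then $P$ admits a selection map if and only if the associated Kolmogorov space of $P$ has the universal fixed point property.
   Context: The associated Kolmogorov space of a finite poset $P$ is the set $P$ with the topology whose open sets are the down-sets, i.e. subsets $U$ such that $x\leqslant x'$ and $x'\in U$ imply $x\in U$. Let $M(P)$ be the set of order-preserving maps $P\to P$, partially ordered pointwise ($f\leqslant g$ iff $f(x)\leqslant g(x)$ for all $x$). A selection map for $P$ is an order-preserving map $\Phi\colon M(P)\to P$ such that $f(\Phi(f))=\Phi(f)$ for all $f\in M(P)$. A topological space $X$ has the universal fixed point property if for every topological space $T$ and every continuous map $f\colon T\times X\to X$ there exists a continuous map $p\colon T\to X$ with $f(t,p(t))=p(t)$ for all $t\in T$. *)

From HB Require Import structures.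
From mathcomp Require Import all_boot all_order.
From mathcomp Require Import boolp classical_sets topology.
Set Implicit Arguments. Unset Strict Implicit. Unset Printing Implicit Defensive.
Import Order.TTheory.
Local Open Scope classical_set_scope.
Local Open Scope order_scope.

Section Kolmogorov.
Context {disp : Order.disp_t} (P : finPOrderType disp).

Definition order_preserving (f : P -> P) : Prop :=
  forall x y : P, x <= y -> f x <= f y.

Definition monmap := {f : P -> P | order_preserving f}.

Definition monmap_le (f g : monmap) : Prop :=
  forall x : P, proj1_sig f x <= proj1_sig g x.

Definition selection_map (Phi : monmap -> P) : Prop :=
  (forall f g : monmap, monmap_le f g -> Phi f <= Phi g) /\
  (forall f : monmap, proj1_sig f (Phi f) = Phi f).

Definition down_set (U : set P) : Prop :=
  forall x x' : P, x <= x' -> U x' -> U x.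

Definition kolmogorov : Type := P.
HB.instance Definition _ := Choice.on kolmogorov.

Lemma down_setT : down_set setT.
Proof. by []. Qed.

Lemma down_setI : setI_closed down_set.
Proof. by move=> A B hA hB x x' le [/(hA _ _ le) ? /(hB _ _ le) ?]. Qed.

Lemma down_set_bigU (I : Type) (f : I -> set P) :
  (forall i, down_set (f i)) -> down_set (\bigcup_i f i).
Proof. by move=> h x x' le [i _ fi]; exists i => //; exact: h le fi. Qed.

HB.instance Definition _ := @isOpenTopological.Build kolmogorov
  (down_set : set_system kolmogorov) down_setT down_setI down_set_bigU.

End Kolmogorov.

Definition universal_fpp (X : topologicalType) : Prop :=
  forall (T : topologicalType) (f : T * X -> X), continuous f ->
    exists p : T -> X, continuous p /\ forall t : T, f (t, p t) = p t.

From HB Require Import structures.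
From mathcomp Require Import all_boot all_order.
From mathcomp Require Import boolp classical_sets topology.
Set Implicit Arguments. Unset Strict Implicit. Unset Printing Implicit Defensive.
Import Order.TTheory.
Local Open Scope classical_set_scope.
Local Open Scope order_scope.

(* In the down-set (Alexandrov) topology of a preorder the smallest
   neighbourhood of x is the down-set of x, so continuity of a map between two
   such spaces is monotonicity.  Give M(P) the Alexandrov topology of the
   pointwise order.  A continuous f : T * P -> P then curries to a continuous
   map t |-> f(t, -) from T to M(P) (P being finite, "f(s, x) <= f(t, x) near t"
   holds for all x at once), and composing with a selection map yields the
   required continuous family of fixed points.  Conversely the evaluation
   M(P) * P -> P is continuous, and the universal fixed point property applied
   to it produces a continuous, hence monotone, fixed-point selector. *)

Definition down_closed (T : Type) (R : T -> T -> Prop) (U : set T) : Prop :=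
  forall x x', R x x' -> U x' -> U x.

Definition is_down_topology (X : topologicalType) (R : X -> X -> Prop) : Prop :=
  [/\ forall x, R x x, forall x y z, R x y -> R y z -> R x z &
      open = down_closed R].

Section DownTopology.
Variables (X : topologicalType) (R : X -> X -> Prop).
Hypothesis downX : is_down_topology R.

Lemma nbhs_downE (x : X) (A : set X) : nbhs x A <-> forall y, R y x -> A y.
Proof.
case: downX => Rrefl Rtrans openE; rewrite nbhsE; split.
  by move=> [B [+ Bx] BA] y yx; rewrite openE => oB; apply/BA/(oB _ _ yx).
move=> xA; exists (R^~ x) => //; split => //.
by rewrite openE => y z yz zx; apply: Rtrans yz zx.
Qed.

Lemma continuous_into_downP (T : topologicalType) (f : T -> X) :
  continuous f <-> forall t, \forall s \near t, R (f s) (f t).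
Proof.
split=> [fc t | fR t A /nbhs_downE ftA].
  by apply: (fc t (R^~ (f t))); apply/nbhs_downE.
by apply: filterS (fR t) => s; apply: ftA.
Qed.

End DownTopology.

Lemma continuous_downP (X Y : topologicalType) (RX : X -> X -> Prop)
    (RY : Y -> Y -> Prop) :
  is_down_topology RX -> is_down_topology RY -> forall f : X -> Y,
  continuous f <-> forall x y, RX x y -> RY (f x) (f y).
Proof.
move=> downX downY f; rewrite (continuous_into_downP downY).
split=> [fR x y xy | fR x].
  exact: (nbhs_downE downX _ _).1 (fR y) x xy.
by apply/(nbhs_downE downX _ _) => y; apply: fR.
Qed.

Definition alexandrov (T : Type) (R : T -> T -> Prop) : Type := T.

Section Alexandrov.
Variables (T : Type) (R : T -> T -> Prop).

HB.instance Definition _ := gen_eqMixin (alexandrov R).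
HB.instance Definition _ := gen_choiceMixin (alexandrov R).

Lemma down_closedT : down_closed R setT.
Proof. by []. Qed.

Lemma down_closedI : setI_closed (down_closed R).
Proof. by move=> A B hA hB x x' le [/(hA _ _ le) ? /(hB _ _ le) ?]. Qed.

Lemma down_closed_bigU (I : Type) (F : I -> set T) :
  (forall i, down_closed R (F i)) -> down_closed R (\bigcup_i F i).
Proof. by move=> h x x' le [i _ Fi]; exists i => //; exact: h le Fi. Qed.

HB.instance Definition _ := @isOpenTopological.Build (alexandrov R)
  (down_closed R) down_closedT down_closedI down_closed_bigU.

Lemma alexandrov_down :
  (forall x, R x x) -> (forall x y z, R x y -> R y z -> R x z) ->
  is_down_topology (R : alexandrov R -> alexandrov R -> Prop).
Proof. by []. Qed.

End Alexandrov.

Lemma continuous_pairl (T U V : topologicalType) (f : T * U -> V) (u : U) :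
  continuous f -> continuous (fun t => f (t, u)).
Proof.
move=> fc t; apply: (continuous_comp (f := fun t => (t, u))) (fc (t, u)).
by apply: cvg_pair; [exact: cvg_id | exact: cvg_cst].
Qed.

Lemma continuous_pairr (T U V : topologicalType) (f : T * U -> V) (t : T) :
  continuous f -> continuous (fun u => f (t, u)).
Proof.
move=> fc u; apply: (continuous_comp (f := fun u => (t, u))) (fc (t, u)).
by apply: cvg_pair; [exact: cvg_cst | exact: cvg_id].
Qed.

Section SelectionMaps.
Context {disp : Order.disp_t} (P : finPOrderType disp).
Local Notation K := (kolmogorov P).
Local Notation M := (alexandrov (@monmap_le _ P)).

Lemma kolmogorov_down : is_down_topology (fun x y : K => (x : P) <= y).
Proof. by split => // x y z; apply: le_trans. Qed.

Lemma pointwise_down : is_down_topology (@monmap_le _ P : M -> M -> Prop).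
Proof.
apply: alexandrov_down => [f x | f g h fg gh x] //.
exact: le_trans (fg x) (gh x).
Qed.

Lemma continuous_order_preserving (f : K -> K) :
  continuous f -> order_preserving f.
Proof. by move/(continuous_downP kolmogorov_down kolmogorov_down f). Qed.

Section Curry.
Variables (T : topologicalType) (f : T * K -> K).
Hypothesis fc : continuous f.

Definition curry_monmap (t : T) : M :=
  exist _ _ (continuous_order_preserving (continuous_pairr (t := t) fc)).

Lemma continuous_curry_monmap : continuous curry_monmap.
Proof.
apply/(continuous_into_downP pointwise_down) => t.
apply: filter_forall => x.
have := continuous_pairl (u := x : K) fc.
by move/(continuous_into_downP kolmogorov_down); apply.
Qed.

End Curry.

Lemma continuous_eval : continuous (fun q : M * K => (proj1_sig q.1 q.2 : K)).
Proof.
apply/(continuous_into_downP kolmogorov_down) => -[g x].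
exists ((@monmap_le _ P)^~ g : set M, [set y : K | (y : P) <= x]).
  by split; [apply/(nbhs_downE pointwise_down) |
              apply/(nbhs_downE kolmogorov_down)].
by move=> [h y] [/= hg yx]; apply: le_trans (hg y) (proj2_sig g _ _ yx).
Qed.

Lemma selection_map_universal_fpp (Phi : monmap P -> P) :
  selection_map Phi -> universal_fpp K.
Proof.
move=> [Phi_mono Phi_fix] T f fc.
have Phic : continuous (Phi : M -> K).
  exact: (continuous_downP pointwise_down kolmogorov_down (Phi : M -> K)).2.
exists ((Phi : M -> K) \o curry_monmap fc); split => t.
  by apply: continuous_comp; [exact: continuous_curry_monmap | exact: Phic].
exact: Phi_fix (curry_monmap fc t).
Qed.

Lemma universal_fpp_selection_map :
  universal_fpp K -> exists Phi : monmap P -> P, selection_map Phi.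
Proof.
move=> fppK; have [p [pc pfix]] := fppK M _ continuous_eval.
exists p; split=> [|f]; last exact: pfix.
exact/(continuous_downP pointwise_down kolmogorov_down).
Qed.

End SelectionMaps.

Theorem proposition8p1 (disp : Order.disp_t) (P : finPOrderType disp) :
  (exists Phi : monmap P -> P, selection_map Phi) <->
  universal_fpp (kolmogorov P).
Proof.
split; last exact: universal_fpp_selection_map.
by move=> [Phi /selection_map_universal_fpp].
Qed.
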